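(* Let $R$ be a finite commutative ring with identity such that every residue field $R/\mathfrak{m}$, $\mathfrak{m}\in\mathrm{Max}(R)$, has odd characteristic. Then $$\chi\big(\mathrm{Reg}(\Gamma(R))\big)=\omega\big(\mathrm{Reg}(\Gamma(R))\big)=2^{|\mathrm{Max}(R)|}.$$
   Context: $Z(R)$ is the set of zero-divisors of $R$ (including $0$), $\mathrm{Reg}(R)=R\setminus Z(R)$ the set of regular elements, and $\mathrm{Max}(R)$ the set of maximal ideals. The total graph $T(\Gamma(R))$ is the simple graph with vertex set $R$ in which distinct $x,y$ are adjacent iff $x+y\in Z(R)$; $\mathrm{Reg}(\Gamma(R))$ is its induced subgraph on $\mathrm{Reg}(R)$. $\chi$ and $\omega$ denote chromatic and clique number. *)

From mathcomp Require Import all_boot all_order all_algebra.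
Set Implicit Arguments. Unset Strict Implicit. Unset Printing Implicit Defensive.
Import GRing.Theory.
Local Open Scope ring_scope.

Section RingGraph.
Variable R : finComNzRingType.

(* Z(R): zero-divisors, including 0 *)
Definition zdiv (x : R) : bool := [exists y : R, (y != 0) && (x * y == 0)].
Definition regular (x : R) : bool := ~~ zdiv x.

Definition is_ideal (I : {set R}) : bool :=
  [&& 0 \in I,
      [forall x, forall y, (x \in I) && (y \in I) ==> (x - y \in I)] &
      [forall r, forall x, (x \in I) ==> (r * x \in I)]].

Definition is_maximal_ideal (I : {set R}) : bool :=
  [&& is_ideal I, (1 \notin I) &
      [forall J : {set R}, is_ideal J && (I \subset J) ==> (J == I) || (1 \in J)]].

Definition MaxR : {set {set R}} := [set I | is_maximal_ideal I].

(* p is the characteristic of R/m: least p > 0 with p*1 = 0 in R/m, i.e. p%:R \in m *)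
Definition is_residue_char (m : {set R}) (p : nat) : Prop :=
  [/\ (0 < p)%N, p%:R \in m & forall k, (0 < k < p)%N -> k%:R \notin m].

(* adjacency in Reg(Gamma(R)) (the induced subgraph of the total graph on Reg(R)) *)
Definition reg_adj (x y : R) : bool :=
  [&& regular x, regular y, x != y & zdiv (x + y)].

Definition proper_coloring (k : nat) (f : {ffun R -> 'I_k}) : bool :=
  [forall x, forall y, reg_adj x y ==> (f x != f y)].

Definition colorable (k : nat) : bool :=
  [exists f : {ffun R -> 'I_k}, proper_coloring f].

Lemma colorable_exists : exists k, colorable k.
Proof.
exists #|R|; apply/existsP; exists [ffun x => enum_rank x].
apply/forallP => x; apply/forallP => y; apply/implyP => /and4P [_ _ nxy _].
by rewrite !ffunE; apply: contra nxy => /eqP /enum_rank_inj ->.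
Qed.

Definition chi_reg : nat := ex_minn colorable_exists.

Definition is_clique (S : {set R}) : bool :=
  [forall x in S, regular x] &&
  [forall x in S, forall y in S, (x != y) ==> reg_adj x y].

Definition omega_reg : nat := \max_(S : {set R} | is_clique S) #|S|.

End RingGraph.

(* For a maximal ideal m of odd residue characteristic and a regular x, the
   classes of x and -x mod m are distinct, because 2x lies in no maximal
   ideal.  Declaring canonically one of the two classes {x, -x} "positive"
   gives a sign s_m(x), and x + y in m forces s_m(x) <> s_m(y).  As x + y is a
   zero-divisor exactly when it lies in some maximal ideal, the sign vector
   (s_m(x))_m is a proper colouring of Reg(Gamma(R)) with 2^|Max(R)| colours.
   Conversely, by the Chinese remainder theorem every sign pattern e in
   {1,-1}^Max(R) is realised by an x_e with x_e = e_m mod m for all m; such an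
   x_e is regular, and two patterns differing at m give x_e + x_e' in m, so the
   x_e form a clique of the same size. *)
From mathcomp Require Import all_boot all_order all_algebra.
From mathcomp Require Import ring.
Set Implicit Arguments. Unset Strict Implicit. Unset Printing Implicit Defensive.
Import GRing.Theory.
Local Open Scope ring_scope.

Section ColoringClique.
Variable R : finComNzRingType.

Lemma card_clique_le_coloring k (f : {ffun R -> 'I_k}) (S : {set R}) :
  proper_coloring f -> is_clique S -> (#|S| <= k)%N.
Proof.
move=> /forallP f_proper /andP[_ /forallP S_clique].
have f_inj : {in S &, injective f}.
  move=> x y xS yS fxy; apply/eqP; apply: contraT => nxy.
  have /forallP/(_ y) := implyP (S_clique x) xS.
  rewrite yS nxy /= => adj_xy.
  by have /forallP/(_ y) := f_proper x; rewrite adj_xy fxy eqxx.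
by rewrite -(card_in_imset f_inj) (leq_trans (max_card _)) ?card_ord.
Qed.

Lemma chi_omega_reg_eq k (f : {ffun R -> 'I_k}) (S : {set R}) :
  proper_coloring f -> is_clique S -> #|S| = k ->
  chi_reg R = k /\ omega_reg R = k.
Proof.
move=> f_proper S_clique cardS; split.
  rewrite /chi_reg; case: ex_minnP => k' /existsP[f' f'_proper] k'_min.
  apply/eqP; rewrite eqn_leq k'_min; last by apply/existsP; exists f.
  by rewrite -cardS (card_clique_le_coloring f'_proper).
apply/eqP; rewrite eqn_leq; apply/andP; split.
  by apply/bigmax_leqP => T; apply: card_clique_le_coloring f_proper.
by rewrite -cardS (leq_bigmax_cond _ S_clique).
Qed.

End ColoringClique.

Section Ideals.
Variable R : finComNzRingType.
Implicit Types (x y r : R) (I J m : {set R}).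

Lemma is_idealP I : is_ideal I ->
  [/\ 0 \in I, forall x y, x \in I -> y \in I -> x - y \in I &
      forall r x, x \in I -> r * x \in I].
Proof.
case/and3P=> I0 /forallP IB /forallP IM; split=> // [x y xI yI|r x xI].
  by have /forallP/(_ y)/implyP := IB x; apply; rewrite xI.
by have /forallP/(_ x)/implyP := IM r; apply.
Qed.

Lemma is_idealI I : 0 \in I -> (forall x y, x \in I -> y \in I -> x - y \in I) ->
  (forall r x, x \in I -> r * x \in I) -> is_ideal I.
Proof.
move=> I0 IB IM; apply/and3P; split=> //.
  by apply/'forall_forallP=> x y; apply/implyP=> /andP[]; apply: IB.
by apply/'forall_forallP=> r x; apply/implyP; apply: IM.
Qed.

Section OneIdeal.
Variable I : {set R}.
Hypothesis I_ideal : is_ideal I.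

Lemma ideal0 : 0 \in I. Proof. by case/is_idealP: I_ideal. Qed.
Lemma idealB x y : x \in I -> y \in I -> x - y \in I.
Proof. by case/is_idealP: I_ideal => _ IB _; apply: IB. Qed.
Lemma idealMl r x : x \in I -> r * x \in I.
Proof. by case/is_idealP: I_ideal => _ _ IM; apply: IM. Qed.
Lemma idealMr r x : x \in I -> x * r \in I.
Proof. by rewrite mulrC; apply: idealMl. Qed.
Lemma idealN x : x \in I -> - x \in I.
Proof. by move=> xI; rewrite -sub0r idealB ?ideal0. Qed.
Lemma idealD x y : x \in I -> y \in I -> x + y \in I.
Proof. by move=> xI yI; rewrite -[y]opprK idealB ?idealN. Qed.

Lemma ideal_sum (T : finType) (P : pred T) (F : T -> R) :
  (forall i, P i -> F i \in I) -> \sum_(i | P i) F i \in I.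
Proof.
by move=> FI; apply: (big_ind (fun u => u \in I)); [exact: ideal0 | exact: idealD |].
Qed.

Lemma ideal_prod_subr1 (T : finType) (P : pred T) (F : T -> R) :
  (forall i, P i -> F i - 1 \in I) -> \prod_(i | P i) F i - 1 \in I.
Proof.
move=> FI; apply: (big_ind (fun u => u - 1 \in I)) => //.
  by rewrite subrr ideal0.
move=> u v uI vI; have -> : u * v - 1 = u * (v - 1) + (u - 1) by ring.
by rewrite idealD ?idealMl.
Qed.

End OneIdeal.

Lemma maximal_idealP m : m \in MaxR R ->
  [/\ is_ideal m, 1 \notin m &
      forall J, is_ideal J -> m \subset J -> J = m \/ 1 \in J].
Proof.
rewrite inE => /and3P[m_ideal m1 /forallP m_max]; split=> // J J_ideal mJ.
by have /implyP := m_max J; rewrite J_ideal mJ => /(_ isT) /orP[/eqP|]; auto.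
Qed.

Lemma regularP x : reflect (exists u, x * u = 1) (regular x).
Proof.
apply: (iffP idP) => [x_reg | [u xu]].
  have mulx_inj : injective (fun y => x * y).
    move=> y z /eqP; rewrite -subr_eq0 -mulrBr => /eqP xyz.
    apply/eqP; rewrite -subr_eq0; apply: contraNT x_reg => yz_neq0.
    by apply/existsP; exists (y - z); rewrite yz_neq0 xyz eqxx.
  by exists (invF mulx_inj 1); apply: f_invF.
apply/existsPn => y; apply/negP => /andP[/eqP y_neq0 /eqP xy0]; apply: y_neq0.
by rewrite -[y]mulr1 -xu mulrA [y * x]mulrC xy0 mul0r.
Qed.

Lemma regular_sign (b : bool) : regular ((-1) ^+ b : R).
Proof. by apply/regularP; exists ((-1) ^+ b); rewrite -signr_addb addbb. Qed.

Lemma unit_notin_ideal I x u : is_ideal I -> 1 \notin I -> x * u = 1 -> x \notin I.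
Proof. by move=> I_ideal I1 xu; apply: contra I1 => xI; rewrite -xu idealMr. Qed.

Lemma zdiv_of_in_maximal m z : m \in MaxR R -> z \in m -> zdiv z.
Proof.
case/maximal_idealP=> m_ideal m1 _ zm; apply: contraT => /regularP[u zu].
by have := unit_notin_ideal m_ideal m1 zu; rewrite zm.
Qed.

Lemma proper_ideal_sub_maximal I : is_ideal I -> 1 \notin I ->
  exists2 m, m \in MaxR R & I \subset m.
Proof.
move=> I_ideal I1.
pose proper_over J := [&& is_ideal J, I \subset J & 1 \notin J].
have [|m /and3P[m_ideal Im m1] m_max] := @arg_maxnP _ I proper_over (fun J => #|J|).
  by rewrite /proper_over I_ideal subxx.
exists m => //; rewrite inE /is_maximal_ideal m_ideal m1.
apply/forallP => J; apply/implyP => /andP[J_ideal mJ].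
case: (boolP (1 \in J)) => [_|J1]; first by rewrite orbT.
rewrite orbF eq_sym eqEcard mJ /=; apply: m_max.
by rewrite /proper_over J_ideal J1 (subset_trans Im mJ).
Qed.

Lemma principal_ideal x : is_ideal [set x * r | r : R].
Proof.
apply: is_idealI.
- by apply/imsetP; exists 0 => //; rewrite mulr0.
- move=> _ _ /imsetP[r _ ->] /imsetP[s _ ->].
  by apply/imsetP; exists (r - s) => //; rewrite mulrBr.
- move=> r _ /imsetP[s _ ->].
  by apply/imsetP; exists (r * s) => //; rewrite mulrCA.
Qed.

Lemma zdiv_in_maximal x : zdiv x -> exists2 m, m \in MaxR R & x \in m.
Proof.
move=> x_zdiv; have [|m mM xRm] := proper_ideal_sub_maximal (principal_ideal x).
  apply/imsetP => -[r _ /esym xr1].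
  have : regular x by apply/regularP; exists r.
  by rewrite /regular x_zdiv.
exists m => //; apply: (subsetP xRm); apply/imsetP; exists 1 => //.
by rewrite mulr1.
Qed.

Lemma ideal_add I J : is_ideal I -> is_ideal J ->
  is_ideal [set a + c | a in I, c in J].
Proof.
move=> I_ideal J_ideal; apply: is_idealI.
- by apply/imset2P; exists 0 0; rewrite ?ideal0 // addr0.
- move=> _ _ /imset2P[a c aI cJ ->] /imset2P[a' c' aI' cJ' ->].
  apply/imset2P; exists (a - a') (c - c'); rewrite ?idealB //.
  by rewrite opprD addrACA.
- move=> r _ /imset2P[a c aI cJ ->].
  by apply/imset2P; exists (r * a) (r * c); rewrite ?idealMl // mulrDr.
Qed.

Lemma maximal_comaximal m m' : m \in MaxR R -> m' \in MaxR R -> m != m' ->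
  exists b, (b \in m') && (1 - b \in m).
Proof.
move=> /maximal_idealP[m_ideal m1 m_max] /maximal_idealP[m'_ideal m'1 m'_max] mm'.
pose M := [set a + c | a in m, c in m'].
have m_sub : m \subset M.
  by apply/subsetP => a am; apply/imset2P; exists a 0; rewrite ?ideal0 // addr0.
have m'_sub : m' \subset M.
  by apply/subsetP => c cm'; apply/imset2P; exists 0 c; rewrite ?ideal0 // add0r.
case: (m_max _ (ideal_add m_ideal m'_ideal) m_sub) => [M_eq | /imset2P[a b am bm' ab1]].
  rewrite /M M_eq in m'_sub; case: (m'_max _ m_ideal m'_sub) => [m_eq | m1'].
    by rewrite m_eq eqxx in mm'.
  by rewrite m1' in m1.
by exists b; rewrite bm' ab1 addrK.
Qed.

End Ideals.

Section CosetSign.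
Variables (R : finComNzRingType) (m : {set R}).
Hypothesis m_ideal : is_ideal m.
Implicit Types x y : R.

Definition coset_rep x : R := odflt x [pick z | z - x \in m].

Lemma coset_repP x : coset_rep x - x \in m.
Proof. by rewrite /coset_rep; case: pickP => [z //|_] /=; rewrite subrr ideal0. Qed.

Lemma coset_rep_eq x y : x - y \in m -> coset_rep x = coset_rep y.
Proof.
move=> xy; have same_coset z : (z - x \in m) = (z - y \in m).
  apply/idP/idP => zm.
    have -> : z - y = (z - x) + (x - y) by ring.
    exact: idealD.
  have -> : z - x = (z - y) - (x - y) by ring.
  exact: idealB.
rewrite /coset_rep (eq_pick same_coset); case: pickP => //= no_rep.
by have := no_rep y; rewrite subrr ideal0.
Qed.

Definition coset_sign x : bool :=
  (enum_rank (coset_rep x) < enum_rank (coset_rep (- x)))%N.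

Lemma coset_sign_neq x y :
  2%:R * x \notin m -> x + y \in m -> coset_sign x != coset_sign y.
Proof.
move=> m2x xy.
have rep_y : coset_rep y = coset_rep (- x).
  by apply: coset_rep_eq; rewrite opprK addrC.
have rep_Ny : coset_rep (- y) = coset_rep x.
  by apply: coset_rep_eq; rewrite -opprD addrC idealN.
have rep_neq : coset_rep x != coset_rep (- x).
  apply: contra m2x => /eqP rep_x.
  have := idealB m_ideal (coset_repP (- x)) (coset_repP x).
  rewrite rep_x.
  by have -> : coset_rep (- x) - - x - (coset_rep (- x) - x) = 2%:R * x by ring.
rewrite /coset_sign rep_y rep_Ny.
move: rep_neq; rewrite -(inj_eq enum_rank_inj) -(inj_eq val_inj) /=.
by case: ltngtP.
Qed.

End CosetSign.

Section ChineseRemainder.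
Variable R : finComNzRingType.
Implicit Types m : {set R}.

Definition separator m m' : R := odflt 0 [pick b | (b \in m') && (1 - b \in m)].

Lemma separatorP m m' : m \in MaxR R -> m' \in MaxR R -> m != m' ->
  (separator m m' \in m') && (1 - separator m m' \in m).
Proof.
move=> mM m'M mm'; rewrite /separator; case: pickP => [b -> //|no_sep] /=.
by have [b] := maximal_comaximal mM m'M mm'; rewrite no_sep.
Qed.

Definition crt_basis m : R := \prod_(m' in MaxR R | m' != m) separator m m'.

Lemma crt_basis_subr1 m : m \in MaxR R -> crt_basis m - 1 \in m.
Proof.
move=> mM; have [m_ideal _ _] := maximal_idealP mM.
apply: ideal_prod_subr1 => // m' /andP[m'M m'm].
rewrite -opprB idealN //.
by have /andP[] := separatorP mM m'M (contra_neq esym m'm).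
Qed.

Lemma crt_basis_in m m' : m \in MaxR R -> m' \in MaxR R -> m' != m ->
  crt_basis m \in m'.
Proof.
move=> mM m'M m'm; have [m'_ideal _ _] := maximal_idealP m'M.
rewrite /crt_basis (bigD1 m') /=; last by rewrite m'M.
by apply: idealMr => //; have /andP[] := separatorP mM m'M (contra_neq esym m'm).
Qed.

Definition crt_point (v : 'I_#|MaxR R| -> R) : R :=
  \sum_i v i * crt_basis (enum_val i).

Lemma crt_pointP v i : crt_point v - v i \in enum_val i.
Proof.
have mM := enum_valP i; have [m_ideal _ _] := maximal_idealP mM.
rewrite /crt_point (bigD1 i) //= addrAC -{2}[v i]mulr1 -mulrBr.
rewrite idealD ?idealMl ?crt_basis_subr1 //.
apply: ideal_sum => // j ji; apply: idealMl => //.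
by apply: crt_basis_in; rewrite ?enum_valP // (inj_eq enum_val_inj) eq_sym.
Qed.

End ChineseRemainder.

Section OddResidueCharacteristic.
Variable R : finComNzRingType.
Hypothesis residue_char_odd :
  forall (m : {set R}) (p : nat), m \in MaxR R -> is_residue_char m p -> odd p.
Implicit Types (x y : R) (m : {set R}).

Lemma two_notin_maximal m : m \in MaxR R -> 2%:R \notin m.
Proof.
move=> mM; have [_ m1 _] := maximal_idealP mM; apply/negP => m2.
suff : odd 2 by [].
apply: residue_char_odd mM _; split=> // k /andP[k_gt0 k_lt2].
by have -> : k = 1%N by case: k k_gt0 k_lt2 => [|[|]].
Qed.

Lemma mul2_regular_notin_maximal m x : m \in MaxR R -> regular x -> 2%:R * x \notin m.
Proof.
move=> mM /regularP[u xu]; have [m_ideal _ _] := maximal_idealP mM.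
apply: contra (two_notin_maximal mM) => m2x.
by rewrite -[2%:R]mulr1 -{2}xu mulrA idealMr.
Qed.

Local Notation pattern := {ffun 'I_#|MaxR R| -> bool}.

Lemma card_pattern : #|{: pattern}| = (2 ^ #|MaxR R|)%N.
Proof. by rewrite card_ffun card_bool card_ord. Qed.

Definition sign_vector x : pattern := [ffun i => coset_sign (enum_val i) x].

Definition sign_coloring : {ffun R -> 'I_(2 ^ #|MaxR R|)} :=
  [ffun x => cast_ord card_pattern (enum_rank (sign_vector x))].

Lemma proper_sign_coloring : proper_coloring sign_coloring.
Proof.
apply/'forall_forallP => x y; apply/implyP.
case/and4P=> x_reg _ _ /zdiv_in_maximal[m mM xym].
rewrite !ffunE (inj_eq (@cast_ord_inj _ _ _)) (inj_eq enum_rank_inj).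
pose i := enum_rank_in mM m; have i_m : enum_val i = m by rewrite enum_rankK_in.
have [m_ideal _ _] := maximal_idealP mM.
apply: contra_neq (coset_sign_neq m_ideal (mul2_regular_notin_maximal mM x_reg) xym).
by move/(congr1 (fun c : pattern => c i)); rewrite !ffunE i_m.
Qed.

Definition pattern_point (c : pattern) : R := crt_point (fun i => (-1) ^+ c i).

Lemma pattern_point_regular c : regular (pattern_point c).
Proof.
apply/negP => /zdiv_in_maximal[m mM cm]; have [m_ideal _ _] := maximal_idealP mM.
pose i := enum_rank_in mM m; have i_m : enum_val i = m by rewrite enum_rankK_in.
have := crt_pointP (fun i => (-1) ^+ c i) i; rewrite i_m => c_sign.
have := idealB m_ideal cm c_sign; rewrite opprB addrC subrK => /(zdiv_of_in_maximal mM).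
by apply/negP; apply: regular_sign.
Qed.

Lemma pattern_point_adj c c' : c != c' -> reg_adj (pattern_point c) (pattern_point c').
Proof.
move=> cc'; have [i c_i] : exists i, c i != c' i.
  apply/existsP; apply: contraNT cc' => /existsPn c_eq.
  by apply/eqP/ffunP => i; apply/eqP/negPn.
have mM := enum_valP i; have [m_ideal _ _] := maximal_idealP mM.
pose s : R := (-1) ^+ c i.
have pc : pattern_point c - s \in enum_val i := crt_pointP _ i.
have pc' : pattern_point c' + s \in enum_val i.
  have c'_i : c' i = ~~ c i by move: c_i; case: (c i); case: (c' i).
  by have := crt_pointP (fun i => (-1) ^+ c' i) i; rewrite c'_i signrN opprK.
rewrite /reg_adj !pattern_point_regular /=; apply/andP; split.
  move: (mul2_regular_notin_maximal mM (regular_sign R (c i))).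
  apply: contraNneq => c_eq.
  have := idealB m_ideal pc' pc; rewrite c_eq.
  by have -> : pattern_point c' + s - (pattern_point c' - s) = 2%:R * s by ring.
apply: (zdiv_of_in_maximal mM).
by have := idealD m_ideal pc pc'; rewrite addrACA addNr addr0.
Qed.

Lemma pattern_points_clique : is_clique [set pattern_point c | c : pattern].
Proof.
apply/andP; split.
  by apply/forall_inP => _ /imsetP[c _ ->]; apply: pattern_point_regular.
apply/forall_inP => _ /imsetP[c _ ->]; apply/forall_inP => _ /imsetP[c' _ ->].
by apply/implyP => cc'; apply: pattern_point_adj; apply: contraNneq cc' => ->.
Qed.

Lemma card_pattern_points : #|[set pattern_point c | c : pattern]| = (2 ^ #|MaxR R|)%N.
Proof.
rewrite card_imset ?card_pattern // => c c' cc'.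
apply/eqP; apply: contraT => /pattern_point_adj.
by rewrite cc' /reg_adj eqxx !andbF.
Qed.

End OddResidueCharacteristic.

Theorem corollary16 (R : finComNzRingType) :
  (forall (m : {set R}) (p : nat), m \in MaxR R -> is_residue_char m p -> odd p) ->
  chi_reg R = (2 ^ #|MaxR R|)%N /\ omega_reg R = (2 ^ #|MaxR R|)%N.
Proof.
move=> residue_char_odd.
exact: chi_omega_reg_eq (proper_sign_coloring residue_char_odd)
  (pattern_points_clique residue_char_odd) (card_pattern_points residue_char_odd).
Qed.
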